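(* Let $\rho_{1,n},\rho_{2,n}>0$ and $c_n=o(1)$ be such that \begin{align*} &\mathbb{P}\Big(\max_{e\in\mathcal{E}_{tr}}\sup_{u\in\mathcal{F}_w,\Phi\in\mathcal{F}_{\Phi}}\big|\tfrac{1}{n_e}\langle u\circ\Phi(X^e),\bm{y}^e\rangle-\mathbb{E}[ u\circ\Phi(\bm{x}^{e})\,y^{e}]\big|\leq \tfrac{\rho_{1,n}}{2}\Big)\geq 1-c_n,\\ &\mathbb{P}\Big(\max_{e\in\mathcal{E}_{tr}}\sup_{u\in\mathcal{F}_w,\Phi\in\mathcal{F}_{\Phi}}\big|\tfrac{1}{n_e}\textstyle\sum_{i=1}^{n_e}\{u\circ\Phi(\bm{x}_i^e)\}^2-\mathbb{E}[\{u\circ\Phi(\bm{x}^{e})\}^2]\big|\leq \tfrac{\rho_{2,n}}{2}\Big)\geq 1-c_n . \end{align*} Suppose that for all $\Phi\in\mathcal F_\Phi\setminus\mathcal I^*_\Phi$, either $\max_{e,e'\in\mathcal{E}_{tr}} \sup_{u\in\mathcal{F}_{w}}|\mathbb{E}[ u\circ\Phi(\bm{x}^e)y^e]-\mathbb{E}[u\circ\Phi(\bm{x}^{e'})y^{e'}]|>2\rho_{1,n}$ or $\max_{e,e'\in\mathcal{E}_{tr}} \sup_{u\in\mathcal{F}_{w}} |\mathbb{E}[\{ u\circ\Phi(\bm{x}^e)\}^2]-\mathbb{E}[\{ u\circ\Phi(\bm{x}^{e'})\}^2]|>2\rho_{2,n}$, and that $\mathcal I^*_\Phi\neq\emptyset$.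 Then, with probability at least $1-2c_n$, the empirical FAIRM estimator (with tuning parameters $\rho_{1,n},\rho_{2,n}$) satisfies \[ \max_{e\in\mathcal{E}_{all}}\{R^e(\hat{w}^{(\mathrm{FAIRM})}\circ\widehat{\Phi}^{(\mathrm{FAIRM})})-R^e(w^*\circ\Phi^* )\}\leq 4\rho_{1,n}+2\rho_{2,n}. \]
   Context: Finite set of environments $\mathcal E_{all}\supseteq\mathcal E_{tr}$; for each $e$, $(\bm x^e,y^e)\in\mathbb R^p\times\mathbb R$ has distribution $P^e$; weights $\alpha^*_e>0$ on $\mathcal E_{all}$ summing to one. For each $e\in\mathcal E_{tr}$ we observe $n_e$ i.i.d. samples $(\bm x^e_i,y^e_i)\sim P^e$, forming $X^e\in\mathbb R^{n_e\times p}$ and $\bm y^e\in\mathbb R^{n_e}$; $f(X^e)$ denotes the vector $(f(\bm x^e_i))_{i}$. $\mathcal F_\Phi$: class of representations $\Phi:\mathbb R^p\to\mathcal H$; $\mathcal F_w$: class of functions $\mathcal H\to\mathbb R$. $R^e(f)=\mathbb E[(y-f(\bm x))^2]$ for $(\bm x,y)\sim P^e$ independent of $f$. $\mathcal I^*_\Phi$: the set of $\Phi\in\mathcal F_\Phi$ with $\max_{e,e'\in\mathcal E_{all}}\sup_{u\in\mathcal F_w}|\mathbb E[u\circ\Phi(\bm x^e)y^e]-\mathbb E[u\circ\Phi(\bm x^{e'})y^{e'}]|=0$ and $\max_{e,e'\in\mathcal E_{all}}\sup_{u\in\mathcal F_w}|\mathbb E[\{u\circ\Phi(\bm x^e)\}^2]-\mathbb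 E[\{u\circ\Phi(\bm x^{e'})\}^2]|=0$. Full-info FAIRM: $(w^*,\Phi^* )\in\arg\min_{w\in\mathcal F_w,\Phi\in\mathcal I^*_\Phi}\sum_{e\in\mathcal E_{all}}\alpha^*_e\mathbb E[(y^e-w\circ\Phi(\bm x^e))^2]$. Empirical FAIRM: $(\hat w^{(\mathrm{FAIRM})},\widehat\Phi^{(\mathrm{FAIRM})})\in\arg\min_{w\in\mathcal F_w,\Phi\in\mathcal F_\Phi}\sum_{e\in\mathcal E_{tr}}\|\bm y^e-w\circ\Phi(X^e)\|_2^2$ subject to $\max_{e,e'\in\mathcal E_{tr}}\sup_{u\in\mathcal F_w}|\frac1{n_e}\langle u\circ\Phi(X^e),\bm y^e\rangle-\frac1{n_{e'}}\langle u\circ\Phi(X^{e'}),\bm y^{e'}\rangle|\le\rho_{1,n}$ and $\max_{e,e'\in\mathcal E_{tr}}\sup_{u\in\mathcal F_w}|\frac1{n_e}\sum_{i=1}^{n_e}\{u\circ\Phi(\bm x^e_i)\}^2-\frac1{n_{e'}}\sum_{i=1}^{n_{e'}}\{u\circ\Phi(\bm x^{e'}_i)\}^2|\le\rho_{2,n}$. *)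

From mathcomp Require Import all_boot all_order all_algebra.
From mathcomp Require Import all_classical all_reals all_analysis.
Set Implicit Arguments.
Unset Strict Implicit.
Unset Printing Implicit Defensive.
Import Order.TTheory GRing.Theory Num.Theory.
Local Open Scope classical_set_scope.
Local Open Scope ring_scope.

(* Conventions:
   - covariates x live in R^p, represented as [p.-tuple R] with the product
     sigma-algebra; an observation is a pair z = (x, y) : [p.-tuple R * R];
   - the set of all environments E_all is a finite type [Env], the training
     environments form a subset [Etr : {set Env}];
   - P^e is a probability measure [Pe e] on [p.-tuple R * R];
   - representations are functions [p.-tuple R -> H] for an arbitrary type H,
     the classes F_Phi, F_w are (classical) sets of functions. *)

Section FAIRM.
Variables (R : realType) (p : nat) (Env : finType) (H : Type).

Local Notation Z := (p.-tuple R * R)%type.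

(* E[g(x^e, y^e)] for (x^e, y^e) ~ Q (real-valued; finite under the
   square-integrability assumptions of the theorem). *)
Definition expect (Q : probability Z R) (g : Z -> R) : R :=
  fine (\int[Q]_z (g z)%:E).

Definition risk (Q : probability Z R) (f : p.-tuple R -> R) : R :=
  expect Q (fun z => (z.2 - f z.1) ^+ 2).

Definition supR (S : set R) : \bar R := ereal_sup (EFin @` S).

Definition maxsup_dev (E : {set Env}) (Fw : set (H -> R))
    (a : Env -> (H -> R) -> R) : \bar R :=
  supR [set r | exists e e' u,
           [/\ e \in E, e' \in E, Fw u & r = `|a e u - a e' u|] ].

Definition pop1 (Pe : Env -> probability Z R) (Phi : p.-tuple R -> H)
    (e : Env) (u : H -> R) : R := expect (Pe e) (fun z => u (Phi z.1) * z.2).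
Definition pop2 (Pe : Env -> probability Z R) (Phi : p.-tuple R -> H)
    (e : Env) (u : H -> R) : R := expect (Pe e) (fun z => (u (Phi z.1)) ^+ 2).

Definition Istar (Pe : Env -> probability Z R) (FPhi : set (p.-tuple R -> H))
    (Fw : set (H -> R)) (Phi : p.-tuple R -> H) : Prop :=
  [/\ FPhi Phi,
      maxsup_dev [set: Env] Fw (pop1 Pe Phi) = 0%E &
      maxsup_dev [set: Env] Fw (pop2 Pe Phi) = 0%E ].

Definition full_FAIRM (Pe : Env -> probability Z R) (alpha : Env -> R)
    (FPhi : set (p.-tuple R -> H)) (Fw : set (H -> R))
    (w : H -> R) (Phi : p.-tuple R -> H) : Prop :=
  [/\ Fw w, Istar Pe FPhi Fw Phi &
      forall w' Phi', Fw w' -> Istar Pe FPhi Fw Phi' ->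
        \sum_(e : Env) alpha e * risk (Pe e) (w \o Phi)
        <= \sum_(e : Env) alpha e * risk (Pe e) (w' \o Phi') ].

Section Sample.
Context {d : measure_display} {Omega : measurableType d}.
Variables (n : Env -> nat) (sample : forall e : Env, 'I_(n e) -> Omega -> Z).

Definition emp1 (Phi : p.-tuple R -> H) (w : Omega) (e : Env) (u : H -> R) : R :=
  (n e)%:R^-1 * \sum_(i < n e) u (Phi (sample i w).1) * (sample i w).2.
Definition emp2 (Phi : p.-tuple R -> H) (w : Omega) (e : Env) (u : H -> R) : R :=
  (n e)%:R^-1 * \sum_(i < n e) (u (Phi (sample i w).1)) ^+ 2.

Definition emp_loss (Etr : {set Env}) (wf : H -> R) (Phi : p.-tuple R -> H)
    (w : Omega) : R :=
  \sum_(e in Etr) \sum_(i < n e) ((sample i w).2 - wf (Phi (sample i w).1)) ^+ 2.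

Definition emp_constraints (Etr : {set Env}) (FPhi : set (p.-tuple R -> H))
    (Fw : set (H -> R)) (rho1 rho2 : R) (Phi : p.-tuple R -> H) (w : Omega) :=
  [/\ FPhi Phi,
      (maxsup_dev Etr Fw (emp1 Phi w) <= rho1%:E)%E &
      (maxsup_dev Etr Fw (emp2 Phi w) <= rho2%:E)%E ].

Definition emp_FAIRM (Etr : {set Env}) (FPhi : set (p.-tuple R -> H))
    (Fw : set (H -> R)) (rho1 rho2 : R) (w : Omega)
    (wh : H -> R) (Phih : p.-tuple R -> H) : Prop :=
  [/\ Fw wh, emp_constraints Etr FPhi Fw rho1 rho2 Phih w &
      forall w' Phi', Fw w' -> emp_constraints Etr FPhi Fw rho1 rho2 Phi' w ->
        emp_loss Etr wh Phih w <= emp_loss Etr w' Phi' w ].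

Definition iid_samples (P : probability Omega R) (Etr : {set Env})
    (Pe : Env -> probability Z R) : Prop :=
  [/\ forall e (i : 'I_(n e)), e \in Etr -> measurable_fun setT (sample i),
      forall e (i : 'I_(n e)) (B : set Z), e \in Etr -> measurable B ->
        P (sample i @^-1` B) = Pe e B &
      forall (J : {set {e : Env & 'I_(n e)}})
             (B : {e : Env & 'I_(n e)} -> set Z),
        (forall j, j \in J -> tag j \in Etr) ->
        (forall j, j \in J -> measurable (B j)) ->
        P (\bigcap_(j in [set` J]) (sample (tagged j) @^-1` B j)) =
        (\prod_(j in J) P (sample (tagged j) @^-1` B j))%E ].

(* "P(event) >= q", read as inner probability (the events below are defined
   through suprema over uncountable classes and need not be measurable):
   some measurable subevent has probability at least q. *)
Definition prob_ge (P : probability Omega R) (A : set Omega) (q : R) : Prop :=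
  exists2 B : set Omega, measurable B /\ B `<=` A & (q%:E <= P B)%E.

End Sample.
End FAIRM.

From mathcomp Require Import all_boot all_order all_algebra.
From mathcomp Require Import all_classical all_reals all_analysis.
From mathcomp Require Import ring lra.
Import Order.TTheory GRing.Theory Num.Theory.
Local Open Scope classical_set_scope.
Local Open Scope ring_scope.

Set Implicit Arguments.
Unset Strict Implicit.
Unset Printing Implicit Defensive.

(* On the event where both uniform deviations are at most rho_1/2 and
   rho_2/2, every empirical moment is within rho_k/2 of its population value.
   Hence the invariant Phi^* satisfies the empirical constraints, while an
   empirically feasible representation has population deviations at most
   2 rho_k and is invariant by the separation hypothesis.  For an invariant
   Phi, the part -2 E[u(Phi x) y] + E[u(Phi x)^2] of the risk that depends on
   the predictor is the same in every environment, and the empirical loss is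
   an n_e-weighted sum of estimates of it over the training environments, each
   within rho_1 + rho_2/2.  Comparing the empirical losses of the estimator
   and of w^* o Phi^* therefore bounds the excess risk by 2 rho_1 + rho_2 in
   every environment, on an event of probability at least 1 - 2c. *)

Lemma supR_ub (R : realType) (S : set R) (r x : R) :
  S r -> (supR S <= x%:E)%E -> r <= x.
Proof.
move=> Sr; rewrite -lee_fin; apply: le_trans.
by apply: ereal_sup_ubound; exists r.
Qed.

Lemma supR_le (R : realType) (S : set R) (x : R) :
  (forall r, S r -> r <= x) -> (supR S <= x%:E)%E.
Proof. by move=> Sx; apply: ge_ereal_sup => _ [r Sr <-]; rewrite lee_fin Sx. Qed.

Section MaxsupDev.
Variables (R : realType) (Env : finType) (H : Type) (Fw : set (H -> R)).
Implicit Types (E : {set Env}) (a b : Env -> (H -> R) -> R).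

Lemma maxsup_dev_leP E a x :
  (maxsup_dev E Fw a <= x%:E)%E <->
  (forall e e' u, e \in E -> e' \in E -> Fw u -> `|a e u - a e' u| <= x).
Proof.
split=> [le_x e e' u eE e'E Fu | bound].
  by apply: supR_ub le_x; exists e, e', u.
by apply: supR_le => _ [e [e' [u [eE e'E Fu ->]]]]; exact: bound.
Qed.

Lemma maxsup_dev_eq0 a :
  maxsup_dev [set: Env] Fw a = 0%E -> forall e e' u, Fw u -> a e u = a e' u.
Proof.
move=> dev0 e e' u Fu; apply/eqP; rewrite -subr_eq0 -normr_le0.
by apply: (proj1 (maxsup_dev_leP _ _ _)) => //; rewrite ?dev0 ?in_setT.
Qed.

Lemma maxsup_dev_perturb E a b x delta :
  (forall e u, e \in E -> Fw u -> `|a e u - b e u| <= delta) ->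
  (maxsup_dev E Fw a <= x%:E)%E -> (maxsup_dev E Fw b <= (x + 2 * delta)%:E)%E.
Proof.
move=> ab /maxsup_dev_leP dev_a; apply/maxsup_dev_leP => e e' u eE e'E Fu.
move: (dev_a e e' u eE e'E Fu) (ab e u eE Fu) (ab e' u e'E Fu).
rewrite !ler_norml => /andP[? ?] /andP[? ?] /andP[? ?]; apply/andP; split; lra.
Qed.

End MaxsupDev.

Lemma const_le_of_wsum_le (R : realFieldType) (I : finType) (E : {set I})
    (m a b : I -> R) (A B delta : R) :
  (forall i, i \in E -> 0 <= m i) -> 0 < \sum_(i in E) m i ->
  (forall i, i \in E -> `|a i - A| <= delta /\ `|b i - B| <= delta) ->
  \sum_(i in E) m i * a i <= \sum_(i in E) m i * b i -> A - B <= 2 * delta.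
Proof.
move=> m_ge0 m_gt0 approx le_ab.
have lo : (\sum_(i in E) m i) * (A - delta) <= \sum_(i in E) m i * a i.
  rewrite mulr_suml; apply: ler_sum => i iE; apply: ler_wpM2l; first exact: m_ge0.
  by have [+ _] := approx i iE; rewrite ler_norml => /andP[? ?]; lra.
have hi : \sum_(i in E) m i * b i <= (\sum_(i in E) m i) * (B + delta).
  rewrite mulr_suml; apply: ler_sum => i iE; apply: ler_wpM2l; first exact: m_ge0.
  by have [_ +] := approx i iE; rewrite ler_norml => /andP[? ?]; lra.
have : (\sum_(i in E) m i) * (A - delta) <= (\sum_(i in E) m i) * (B + delta).
  by apply: le_trans hi; apply: le_trans le_ab.
by rewrite ler_pM2l // => ?; lra.
Qed.

Lemma integrable_mul_of_sqr (d : measure_display) (T : measurableType d)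
    (R : realType) (mu : {measure set T -> \bar R}) (f g : T -> R) :
  measurable_fun setT f -> measurable_fun setT g ->
  mu.-integrable setT (fun x => (f x ^+ 2)%:E) ->
  mu.-integrable setT (fun x => (g x ^+ 2)%:E) ->
  mu.-integrable setT (fun x => (f x * g x)%:E).
Proof.
move=> mf mg If Ig.
apply: (le_integrable measurableT) (integrableD measurableT If Ig) => [|x _].
  apply/measurable_realfun.measurable_EFinP.
  exact: measurable_realfun.measurable_funM.
rewrite /= lee_fin [X in _ <= X]ger0_norm ?addr_ge0 ?sqr_ge0 //.
by rewrite ler_norml; apply/andP; split; nra.
Qed.

Section Expectation.
Variables (R : realType) (p : nat).
Local Notation Z := (p.-tuple R * R)%type.
Variable Q : probability Z R.
Implicit Types f g : Z -> R.

Lemma expectD f g :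
  Q.-integrable setT (EFin \o f) -> Q.-integrable setT (EFin \o g) ->
  expect Q (fun z => f z + g z) = expect Q f + expect Q g.
Proof.
move=> If Ig; rewrite /expect.
under eq_integral do rewrite EFinD.
rewrite (integralD_EFin measurableT If Ig) fineD //.
- exact: (integrable_fin_num measurableT If).
- exact: (integrable_fin_num measurableT Ig).
Qed.

Lemma expectZ (k : R) f :
  Q.-integrable setT (EFin \o f) ->
  expect Q (fun z => k * f z) = k * expect Q f.
Proof.
move=> If; rewrite /expect.
under eq_integral do rewrite EFinM.
by rewrite (integralZl measurableT If) fineM // (integrable_fin_num measurableT If).
Qed.

Lemma risk_expand (f : p.-tuple R -> R) :
  Q.-integrable [set: Z] (fun z => (z.2 ^+ 2)%:E) ->
  measurable_fun [set: Z] (fun z => f z.1) ->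
  Q.-integrable [set: Z] (fun z => (f z.1 ^+ 2)%:E) ->
  risk Q f = expect Q (fun z => z.2 ^+ 2)
             - 2 * expect Q (fun z => f z.1 * z.2) + expect Q (fun z => f z.1 ^+ 2).
Proof.
move=> Iy mf If.
have Ify := integrable_mul_of_sqr mf measurable_snd If Iy.
have I2fy : Q.-integrable setT (fun z => (-2 * (f z.1 * z.2))%:E).
  apply: (eq_integrable measurableT _ _ _ (integrableZl measurableT (-2) Ify)).
  by move=> z _; rewrite EFinM.
have Iy2fy : Q.-integrable setT (fun z => (z.2 ^+ 2 + -2 * (f z.1 * z.2))%:E).
  apply: (eq_integrable measurableT _ _ _ (integrableD measurableT Iy I2fy)).
  by move=> z _; rewrite EFinD.
rewrite /risk (_ : (fun z => _) =
  (fun z => (z.2 ^+ 2 + -2 * (f z.1 * z.2)) + f z.1 ^+ 2)); last first.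
  by apply: funext => z; ring.
by rewrite expectD // expectD // expectZ //; ring.
Qed.

End Expectation.

Section EmpiricalFAIRM.
Variables (R : realType) (p : nat) (Env : finType) (H : Type).
Local Notation Z := (p.-tuple R * R)%type.
Variable Pe : Env -> probability Z R.
Variables (FPhi : set (p.-tuple R -> H)) (Fw : set (H -> R)).
Variables (d : measure_display) (Omega : measurableType d) (n : Env -> nat).
Variable sample : forall e : Env, 'I_(n e) -> Omega -> Z.
Variables (Etr : {set Env}) (rho1 rho2 : R) (w : Omega).

Hypothesis Iy : forall e, (Pe e).-integrable [set: Z] (fun z => (z.2 ^+ 2)%:E).
Hypothesis Ifw : forall e u Phi, Fw u -> FPhi Phi ->
  measurable_fun [set: Z] (fun z => u (Phi z.1)) /\
  (Pe e).-integrable [set: Z] (fun z => ((u (Phi z.1)) ^+ 2)%:E).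
Hypothesis Etr0 : Etr != finset.set0.
Hypothesis n_gt0 : forall e, e \in Etr -> (0 < n e)%N.
Hypothesis dev1 : forall e u Phi, e \in Etr -> Fw u -> FPhi Phi ->
  `|emp1 sample Phi w e u - pop1 Pe Phi e u| <= rho1 / 2.
Hypothesis dev2 : forall e u Phi, e \in Etr -> Fw u -> FPhi Phi ->
  `|emp2 sample Phi w e u - pop2 Pe Phi e u| <= rho2 / 2.
Hypothesis separation : forall Phi, FPhi Phi -> ~ Istar Pe FPhi Fw Phi ->
  (maxsup_dev Etr Fw (pop1 Pe Phi) > (2 * rho1)%:E)%E \/
  (maxsup_dev Etr Fw (pop2 Pe Phi) > (2 * rho2)%:E)%E.

Definition pop_fit (Phi : p.-tuple R -> H) (u : H -> R) (e : Env) : R :=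
  -2 * pop1 Pe Phi e u + pop2 Pe Phi e u.
Definition emp_fit (Phi : p.-tuple R -> H) (u : H -> R) (e : Env) : R :=
  -2 * emp1 sample Phi w e u + emp2 sample Phi w e u.

Lemma risk_pop_fit Phi u e : Fw u -> FPhi Phi ->
  risk (Pe e) (u \o Phi) = expect (Pe e) (fun z => z.2 ^+ 2) + pop_fit Phi u e.
Proof.
move=> Fu FP; have [mf If] := Ifw e Fu FP.
by rewrite (risk_expand (Iy e) mf If) /pop_fit /pop1 /pop2; ring.
Qed.

Lemma emp_loss_expand u Phi :
  emp_loss sample Etr u Phi w = \sum_(e in Etr)
    (\sum_(i < n e) (sample i w).2 ^+ 2 + (n e)%:R * emp_fit Phi u e).
Proof.
rewrite /emp_loss; apply: eq_bigr => e eE.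
have n_neq0 : (n e)%:R != 0 :> R by rewrite pnatr_eq0 -lt0n n_gt0.
rewrite /emp_fit /emp1 /emp2 mulrDr mulrCA !(mulVKf n_neq0).
by rewrite mulr_sumr -!big_split; apply: eq_bigr => i _ /=; ring.
Qed.

Lemma Istar_emp_constraints Phi :
  Istar Pe FPhi Fw Phi -> emp_constraints sample Etr FPhi Fw rho1 rho2 Phi w.
Proof.
have pop_dev_le0 a : maxsup_dev [set: Env] Fw a = 0%E ->
    (maxsup_dev Etr Fw a <= 0%:E)%E.
  move=> /maxsup_dev_eq0 inv; apply/maxsup_dev_leP => e e' u _ _ Fu.
  by rewrite (inv e e') // subrr normr0.
move=> [FP /pop_dev_le0 inv1 /pop_dev_le0 inv2]; split=> //.
- rewrite (_ : rho1 = 0 + 2 * (rho1 / 2)); last by field.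
  by apply: maxsup_dev_perturb inv1 => e u eE Fu; rewrite distrC dev1.
- rewrite (_ : rho2 = 0 + 2 * (rho2 / 2)); last by field.
  by apply: maxsup_dev_perturb inv2 => e u eE Fu; rewrite distrC dev2.
Qed.

Lemma emp_constraints_Istar Phi :
  emp_constraints sample Etr FPhi Fw rho1 rho2 Phi w -> Istar Pe FPhi Fw Phi.
Proof.
move=> [FP c1 c2]; apply: contrapT => not_inv.
have [|] := separation FP not_inv; apply/negP; rewrite -leNgt.
- rewrite (_ : 2 * rho1 = rho1 + 2 * (rho1 / 2)); last by field.
  by apply: maxsup_dev_perturb c1 => e u eE Fu; exact: dev1.
- rewrite (_ : 2 * rho2 = rho2 + 2 * (rho2 / 2)); last by field.
  by apply: maxsup_dev_perturb c2 => e u eE Fu; exact: dev2.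
Qed.

Lemma emp_fit_approx Phi u e e' : Istar Pe FPhi Fw Phi -> Fw u -> e \in Etr ->
  `|emp_fit Phi u e - pop_fit Phi u e'| <= rho1 + rho2 / 2.
Proof.
move=> [FP /maxsup_dev_eq0 inv1 /maxsup_dev_eq0 inv2] Fu eE.
rewrite /pop_fit -(inv1 e) // -(inv2 e) //.
move: (dev1 eE Fu FP) (dev2 eE Fu FP); rewrite /emp_fit !ler_norml.
by move=> /andP[? ?] /andP[? ?]; apply/andP; split; lra.
Qed.

Lemma emp_FAIRM_excess_risk wh Phih wstar Phistar e :
  Fw wstar -> Istar Pe FPhi Fw Phistar ->
  emp_FAIRM sample Etr FPhi Fw rho1 rho2 w wh Phih ->
  risk (Pe e) (wh \o Phih) - risk (Pe e) (wstar \o Phistar) <= 2 * rho1 + rho2.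
Proof.
move=> Fws IPs [Fwh cons_h opt].
have IPh := emp_constraints_Istar cons_h.
have [FPh _ _] := IPh; have [FPs _ _] := IPs.
have := opt _ _ Fws (Istar_emp_constraints IPs).
rewrite !emp_loss_expand !big_split lerD2l /= => le_fit.
rewrite (risk_pop_fit _ Fwh FPh) (risk_pop_fit _ Fws FPs) (addrC (expect _ _)) addrKA.
rewrite (_ : 2 * rho1 + rho2 = 2 * (rho1 + rho2 / 2)); last by field.
have n_sum_gt0 : 0 < \sum_(e1 in Etr) (n e1)%:R :> R.
  have [e0 e0E] := set0Pn _ Etr0; rewrite (bigD1 e0) //=.
  by rewrite ltr_pwDl ?ltr0n ?n_gt0 // sumr_ge0.
apply: const_le_of_wsum_le n_sum_gt0 _ le_fit => [i _|i iE].
  exact: ler0n.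
by split; exact: emp_fit_approx.
Qed.

End EmpiricalFAIRM.

Section InnerProbability.
Variables (d : measure_display) (Omega : measurableType d) (R : realType).
Variable P : probability Omega R.

Lemma probability_setI_ge (A B : set Omega) : measurable A -> measurable B ->
  (P A + P B - 1 <= P (A `&` B))%E.
Proof.
move=> mA mB.
have fin X : measurable X -> P X = (fine (P X))%:E.
  by move=> mX; rewrite fineK // fin_num_measure.
have PA_fin : (P A < +oo)%E by rewrite (fin _ mA) ltry.
have PU : P (A `|` B) = (P A + P B - P (A `&` B))%E := measureUfinl mA mB PA_fin.
have := probability_le1 P (measurableU _ _ mA mB).
rewrite PU (fin _ mA) (fin _ mB) (fin _ (measurableI _ _ mA mB)) -!EFinD !lee_fin.
lra.
Qed.

Lemma prob_ge_sub (A A' : set Omega) (q : R) :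
  A `<=` A' -> prob_ge P A q -> prob_ge P A' q.
Proof.
by move=> AA' [B [mB BA] PB]; exists B => //; split=> //; exact: subset_trans AA'.
Qed.

Lemma prob_ge_setI (A B : set Omega) (a b : R) :
  prob_ge P A a -> prob_ge P B b -> prob_ge P (A `&` B) (a + b - 1).
Proof.
move=> [A' [mA' A'A] PA'] [B' [mB' B'B] PB'].
exists (A' `&` B'); first by split; [exact: measurableI | exact: setISS].
apply: le_trans (probability_setI_ge mA' mB'); rewrite EFinB EFinD.
by apply: leeB => //; exact: leeD.
Qed.

End InnerProbability.

Theorem theorem1
  (R : realType) (p : nat) (Env : finType) (H : Type)
  (Etr : {set Env})
  (Pe : Env -> probability (p.-tuple R * R)%type R)
  (alpha : Env -> R)
  (FPhi : set (p.-tuple R -> H)) (Fw : set (H -> R))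
  (d : measure_display) (Omega : measurableType d) (P : probability Omega R)
  (n : Env -> nat)
  (sample : forall e : Env, 'I_(n e) -> Omega -> (p.-tuple R * R)%type)
  (rho1 rho2 c : R)
  (wstar : H -> R) (Phistar : p.-tuple R -> H) :
  (* weights alpha*_e > 0 summing to one *)
  (forall e, 0 < alpha e) -> \sum_(e : Env) alpha e = 1 ->
  (* finite second moments, so that all expectations are well defined *)
  (forall e, (Pe e).-integrable [set: (p.-tuple R * R)%type]
                (fun z => (z.2 ^+ 2)%:E)) ->
  (forall e u Phi, Fw u -> FPhi Phi ->
     measurable_fun [set: (p.-tuple R * R)%type] (fun z => u (Phi z.1)) /\
     (Pe e).-integrable [set: (p.-tuple R * R)%type]
        (fun z => ((u (Phi z.1)) ^+ 2)%:E)) ->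
  (* sampling model *)
  Etr != finset.set0 ->
  (forall e, e \in Etr -> (0 < n e)%N) ->
  iid_samples sample P Etr Pe ->
  0 < rho1 -> 0 < rho2 ->
  (* uniform concentration *)
  prob_ge P [set w | (supR [set r | exists e u Phi,
      [/\ e \in Etr, Fw u, FPhi Phi &
          (r = `|emp1 sample Phi w e u - pop1 Pe Phi e u|)%R ] ]
      <= (rho1 / 2)%R%:E)%E] (1 - c) ->
  prob_ge P [set w | (supR [set r | exists e u Phi,
      [/\ e \in Etr, Fw u, FPhi Phi &
          (r = `|emp2 sample Phi w e u - pop2 Pe Phi e u|)%R ] ]
      <= (rho2 / 2)%R%:E)%E] (1 - c) ->
  (* separation of non-invariant representations *)
  (forall Phi, FPhi Phi -> ~ Istar Pe FPhi Fw Phi ->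
     (maxsup_dev Etr Fw (pop1 Pe Phi) > (2 * rho1)%R%:E)%E \/
     (maxsup_dev Etr Fw (pop2 Pe Phi) > (2 * rho2)%R%:E)%E) ->
  (exists Phi, Istar Pe FPhi Fw Phi) ->
  (* wstar, Phistar : a full-information FAIRM solution *)
  full_FAIRM Pe alpha FPhi Fw wstar Phistar ->
  prob_ge P [set w | forall wh Phih,
      emp_FAIRM sample Etr FPhi Fw rho1 rho2 w wh Phih ->
      forall e : Env,
        risk (Pe e) (wh \o Phih) - risk (Pe e) (wstar \o Phistar)
        <= 4 * rho1 + 2 * rho2] (1 - 2 * c).
Proof.
move=> _ _ Iy Ifw Etr0 n_gt0 _ rho1_gt0 rho2_gt0 conc1 conc2 sep _ [Fws IPs _].
rewrite (_ : 1 - 2 * c = (1 - c) + (1 - c) - 1); last by ring.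
apply: prob_ge_sub (prob_ge_setI conc1 conc2) => w [/= sup1 sup2] wh Phih est e.
have dev1 e1 u Phi : e1 \in Etr -> Fw u -> FPhi Phi ->
    `|emp1 sample Phi w e1 u - pop1 Pe Phi e1 u| <= rho1 / 2.
  by move=> e1E Fu FP; apply: supR_ub sup1; exists e1, u, Phi.
have dev2 e1 u Phi : e1 \in Etr -> Fw u -> FPhi Phi ->
    `|emp2 sample Phi w e1 u - pop2 Pe Phi e1 u| <= rho2 / 2.
  by move=> e1E Fu FP; apply: supR_ub sup2; exists e1, u, Phi.
apply: le_trans (emp_FAIRM_excess_risk Iy Ifw Etr0 n_gt0 dev1 dev2 sep e Fws IPs est) _.
lra.
Qed.
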